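(* Let $\langle W,\varphi,(Y,\mathbb S,\sigma)\rangle$ be a monotone one-dimensional cocycle with skew-product system $(X,\mathbb S_+,\pi)$, $h=\mathrm{pr}_2$, and $\tau\in\mathbb S_+$, $\tau>0$. Assume: (1) $u_1<u_2$ implies $\varphi(k\tau,u_1,y)<\varphi(k\tau,u_2,y)$ for all $k\in\mathbb N$, $y\in Y$; (2) $x_0\in X$ has precompact semi-trajectory; (3) $y_0:=h(x_0)$ is asymptotically $\tau$-periodic, with $q:=\lim_{k\to\infty}\sigma(k\tau,y_0)$; (4) the $\tau$-periodic points of $(X,\mathbb S_+,\pi)$ in the fibre $X_q=W\times\{q\}$ are isolated, i.e. for every $u$ with $\varphi(\tau,u,q)=u$ there is $\delta>0$ such that no $u'\neq u$ with $|u'-u|<\delta$ satisfies $\varphi(\tau,u',q)=u'$. Then $x_0$ is asymptotically $\tau$-periodic, i.e. there is a $\tau$-periodic point $p\in X$ with $\rho(\pi(t,x_0),\pi(t,p))\to0$ as $t\to+\infty$.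
   Context: $\mathbb S=\mathbb R$ or $\mathbb Z$, $\mathbb S_+=\{t\in\mathbb S:t\ge0\}$. $(Y,\mathbb S,\sigma)$ is a two-sided dynamical system on a complete metric space; $y_0$ is asymptotically $\tau$-periodic if there is $q$ with $\sigma(\tau,q)=q$ and $\rho(\sigma(t,y_0),\sigma(t,q))\to0$. $W\subseteq\mathbb R$ is an interval; a monotone cocycle is a continuous $\varphi:\mathbb S_+\times W\times Y\to W$ with $\varphi(0,u,y)=u$, $\varphi(t+s,u,y)=\varphi(t,\varphi(s,u,y),\sigma(s,y))$ and $u_1\le u_2\Rightarrow\varphi(t,u_1,y)\le\varphi(t,u_2,y)$. Skew-product: $X=W\times Y$, $\pi(t,(u,y))=(\varphi(t,u,y),\sigma(t,y))$; a point $p$ is $\tau$-periodic if $\pi(\tau,p)=p$. *)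

From Stdlib Require Import Reals.
Open Scope R_scope.

Definition is_metric {Y : Type} (d : Y -> Y -> R) : Prop :=
  (forall x y, 0 <= d x y) /\
  (forall x y, d x y = 0 <-> x = y) /\
  (forall x y, d x y = d y x) /\
  (forall x y z, d x z <= d x y + d y z).

Definition seq_cauchy {Y : Type} (d : Y -> Y -> R) (s : nat -> Y) : Prop :=
  forall eps, 0 < eps -> exists N, forall m n, (N <= m)%nat -> (N <= n)%nat ->
    d (s m) (s n) < eps.

Definition seq_lim {Y : Type} (d : Y -> Y -> R) (s : nat -> Y) (l : Y) : Prop :=
  forall eps, 0 < eps -> exists N, forall n, (N <= n)%nat -> d (s n) l < eps.

Definition complete_metric {Y : Type} (d : Y -> Y -> R) : Prop :=
  is_metric d /\ forall s, seq_cauchy d s -> exists l, seq_lim d s l.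

(* ---------- the time set S = R (disc = false) or S = Z (disc = true),
   realized as a subset of R ---------- *)
Definition inS (disc : bool) (t : R) : Prop :=
  if disc then exists z : Z, t = IZR z else True.

Definition inSp (disc : bool) (t : R) : Prop := inS disc t /\ 0 <= t.

Definition tends0_S (disc : bool) (f : R -> R) : Prop :=
  forall eps, 0 < eps -> exists T, forall t, inS disc t -> T <= t -> Rabs (f t) < eps.

Definition dyn_system (disc : bool) {Y : Type} (rho : Y -> Y -> R)
  (sigma : R -> Y -> Y) : Prop :=
  (forall y, sigma 0 y = y) /\
  (forall t s y, inS disc t -> inS disc s -> sigma (t + s) y = sigma t (sigma s y)) /\
  (forall t y eps, inS disc t -> 0 < eps -> exists delta, 0 < delta /\
     forall t' y', inS disc t' -> Rabs (t' - t) < delta -> rho y y' < delta ->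
       rho (sigma t y) (sigma t' y') < eps).

Definition asympt_periodic_Y (disc : bool) {Y : Type} (rho : Y -> Y -> R)
  (sigma : R -> Y -> Y) (tau : R) (y0 : Y) : Prop :=
  exists q, sigma tau q = q /\ tends0_S disc (fun t => rho (sigma t y0) (sigma t q)).

Definition is_interval (W : R -> Prop) : Prop :=
  forall a b c, W a -> W c -> a <= b -> b <= c -> W b.

Definition monotone_cocycle (disc : bool) {Y : Type} (rho : Y -> Y -> R)
  (sigma : R -> Y -> Y) (W : R -> Prop) (phi : R -> R -> Y -> R) : Prop :=
  (forall t u y, inSp disc t -> W u -> W (phi t u y)) /\
  (forall t u y eps, inSp disc t -> W u -> 0 < eps -> exists delta, 0 < delta /\
     forall t' u' y', inSp disc t' -> W u' -> Rabs (t' - t) < delta ->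
       Rabs (u' - u) < delta -> rho y y' < delta ->
       Rabs (phi t u y - phi t' u' y') < eps) /\
  (forall u y, W u -> phi 0 u y = u) /\
  (forall t s u y, inSp disc t -> inSp disc s -> W u ->
     phi (t + s) u y = phi t (phi s u y) (sigma s y)) /\
  (forall t u1 u2 y, inSp disc t -> W u1 -> W u2 -> u1 <= u2 ->
     phi t u1 y <= phi t u2 y).

Definition skew {Y : Type} (sigma : R -> Y -> Y) (phi : R -> R -> Y -> R)
  (t : R) (x : R * Y) : R * Y :=
  (phi t (fst x) (snd x), sigma t (snd x)).

Definition rhoX {Y : Type} (rho : Y -> Y -> R) (x x' : R * Y) : R :=
  Rabs (fst x - fst x') + rho (snd x) (snd x').

Definition inX (W : R -> Prop) {Y : Type} (x : R * Y) : Prop := W (fst x).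

Definition precompact_X (W : R -> Prop) {Y : Type} (rho : Y -> Y -> R)
  (A : R * Y -> Prop) : Prop :=
  forall s : nat -> R * Y, (forall n, A (s n)) ->
    exists (g : nat -> nat) (p : R * Y),
      (forall n, (g n < g (S n))%nat) /\ inX W p /\
      seq_lim (rhoX rho) (fun n => s (g n)) p.

Definition semi_traj (disc : bool) {Y : Type} (sigma : R -> Y -> Y)
  (phi : R -> R -> Y -> R) (x0 : R * Y) : R * Y -> Prop :=
  fun x => exists t, inSp disc t /\ x = skew sigma phi t x0.

(* Put u_k = phi(k tau, x0) and y_k = sigma(k tau, y0) -> q.  The recursion
   u_{k+1} = phi(tau, u_k, y_k) is monotone and asymptotically autonomous, with limit
   map f = phi(tau, ., q).  If u_k had two cluster points a < b, then for every w in
   (a, b) with f w <> w the orbit would eventually be trapped on one side of w, so f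
   would fix all of (a, b), against isolation of its fixed points.  By precompactness
   u_k therefore converges to a fixed point u* of f, and p = (u*, q) is tau-periodic.
   Since phi is uniformly continuous on [0, tau], convergence along the times k tau
   propagates to all times. *)

From Stdlib Require Import Reals ZArith Lia Lra Classical ClassicalEpsilon.
Open Scope R_scope.

Definition cluster_point (u : nat -> R) (a : R) : Prop :=
  forall eps, 0 < eps -> forall N, exists k, (N <= k)%nat /\ Rabs (u k - a) < eps.

Lemma cluster_point_reindex (u : nat -> R) (h : nat -> nat) (a : R) :
  (forall n, (n <= h n)%nat) -> cluster_point (fun n => u (h n)) a -> cluster_point u a.
Proof.
  intros Hh Ha eps Heps N. destruct (Ha eps Heps N) as [n [HNn Hn]].
  exists (h n). split; [specialize (Hh n); lia | exact Hn].
Qed.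

Lemma cluster_point_bounded (u : nat -> R) (a b : R) :
  (forall n, a <= u n <= b) -> exists l, a <= l <= b /\ cluster_point u l.
Proof.
  intros Hu.
  destruct (Bolzano_Weierstrass u (fun c => a <= c <= b) (compact_P3 a b) Hu) as [l Hl].
  assert (Hc : cluster_point u l).
  { intros eps Heps N.
    destruct (Hl (fun x => Rabs (x - l) < eps) N) as [k [HNk Hk]].
    - exists (mkposreal eps Heps). intros x Hx. exact Hx.
    - exists k. split; [lia | exact Hk]. }
  exists l. split; [|exact Hc].
  split; apply Rnot_lt_le; intros Hout.
  - destruct (Hc (a - l) ltac:(lra) 0%nat) as [k [_ Hk]].
    specialize (Hu k). apply Rabs_def2 in Hk. lra.
  - destruct (Hc (l - b) ltac:(lra) 0%nat) as [k [_ Hk]].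
    specialize (Hu k). apply Rabs_def2 in Hk. lra.
Qed.

Lemma Un_cv_of_unique_cluster_point (P : R -> Prop) (u : nat -> R) :
  (forall h : nat -> nat, (forall n, (n <= h n)%nat) ->
     exists a, P a /\ cluster_point (fun n => u (h n)) a) ->
  (forall a b, P a -> P b -> cluster_point u a -> cluster_point u b -> a = b) ->
  exists l, P l /\ Un_cv u l.
Proof.
  intros Hsub Huniq.
  destruct (Hsub (fun n => n) (fun n => le_n n)) as [l [Pl Hl]].
  exists l. split; [exact Pl|].
  intros eps Heps. apply NNPP. intros Hnot.
  assert (Hfar : forall N, exists k, (N <= k)%nat /\ eps <= Rabs (u k - l)).
  { intros N. apply NNPP. intros HN. apply Hnot. exists N. intros k Hk.
    apply Rnot_le_lt. intros Hle. apply HN. exists k. split; [exact Hk | exact Hle]. }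
  destruct (choice _ Hfar) as [h Hh].
  destruct (Hsub h (fun n => proj1 (Hh n))) as [a [Pa Ha]].
  assert (Hal : a = l).
  { apply Huniq; [exact Pa | exact Pl | | exact Hl].
    exact (cluster_point_reindex u h a (fun n => proj1 (Hh n)) Ha). }
  subst a. destruct (Ha eps Heps 0%nat) as [n [_ Hn]].
  specialize (Hh n). lra.
Qed.

Lemma strictly_increasing_ge_id (g : nat -> nat) :
  (forall n, (g n < g (S n))%nat) -> forall n, (n <= g n)%nat.
Proof. intros Hg n. induction n as [|n IH]; [lia | specialize (Hg n); lia]. Qed.

Lemma choice_pair {A B : Type} (P : nat -> A -> B -> Prop) :
  (forall n, exists a b, P n a b) -> exists (f : nat -> A) (g : nat -> B), forall n, P n (f n) (g n).
Proof.
  intros H. destruct (choice (fun n ab => P n (fst ab) (snd ab))) as [fg Hfg].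
  - intros n. destruct (H n) as [a [b Hab]]. exists (a, b). exact Hab.
  - exists (fun n => fst (fg n)), (fun n => snd (fg n)). exact Hfg.
Qed.

Lemma inSp_INR_mul (disc : bool) (t : R) (k : nat) : inSp disc t -> inSp disc (INR k * t).
Proof.
  intros [Ht Ht0]. split.
  - destruct disc; [|exact I]. destruct Ht as [z ->].
    exists (Z.of_nat k * z)%Z. rewrite mult_IZR, <- INR_IZR_INZ. reflexivity.
  - apply Rmult_le_pos; [apply pos_INR | exact Ht0].
Qed.

Lemma inS_sub (disc : bool) (t s : R) : inS disc t -> inS disc s -> inS disc (t - s).
Proof.
  destruct disc; [|easy]. intros [m ->] [n ->]. exists (m - n)%Z. symmetry; apply minus_IZR.
Qed.

Lemma inS_cluster_point (disc : bool) (f : nat -> R) (l : R) :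
  (forall n, inS disc (f n)) -> cluster_point f l -> inS disc l.
Proof.
  destruct disc; [|easy]. intros Hf Hl.
  destruct (Hl (1/2) ltac:(lra) 0%nat) as [k [_ Hk]].
  destruct (Hf k) as [z Hz]. exists z.
  apply NNPP. intros Hne.
  destruct (Hl (Rmin (1/2) (Rabs (l - IZR z))) ltac:(apply Rmin_pos; [lra | apply Rabs_pos_lt; lra])
              0%nat) as [j [_ Hj]].
  pose proof (Rmin_l (1/2) (Rabs (l - IZR z))). pose proof (Rmin_r (1/2) (Rabs (l - IZR z))).
  destruct (Hf j) as [z' Hz'].
  assert (Hzz : z' = z).
  { rewrite Hz in Hk. rewrite Hz' in Hj.
    apply Rabs_def2 in Hk. apply Rabs_def2 in Hj.
    assert (Hlt : IZR (z' - z) < IZR 1) by (rewrite minus_IZR; lra).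
    assert (Hgt : IZR (-1) < IZR (z' - z)) by (rewrite minus_IZR; lra).
    apply lt_IZR in Hlt. apply lt_IZR in Hgt. lia. }
  rewrite Hz', Hzz, Rabs_minus_sym in Hj. lra.
Qed.

Lemma nat_mul_eventually_ge (tau T : R) : 0 < tau -> exists K, forall k, (K <= k)%nat -> T <= INR k * tau.
Proof.
  intros Htau. destruct (archimed (T / tau)) as [Hup _].
  exists (Z.to_nat (up (T / tau))). intros k Hk.
  apply le_INR in Hk. rewrite INR_IZR_INZ in Hk.
  assert (HT : T / tau <= INR k).
  { destruct (Z_le_gt_dec 0 (up (T / tau))) as [H0 | H0].
    - rewrite Z2Nat.id in Hk by exact H0. lra.
    - apply Z.gt_lt, IZR_lt in H0. pose proof (pos_INR k). lra. }
  apply (Rmult_le_compat_r tau) in HT; [|lra].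
  unfold Rdiv in HT. rewrite Rmult_assoc, Rinv_l, Rmult_1_r in HT; lra.
Qed.

Lemma inS_period_decomposition (disc : bool) (tau t : R) :
  0 < tau -> inSp disc tau -> inSp disc t ->
  exists k s, t = s + INR k * tau /\ inSp disc s /\ s < tau.
Proof.
  intros Htau Htau_S [Ht Ht0].
  set (k := Z.to_nat (up (t / tau) - 1)).
  destruct (archimed (t / tau)) as [Hup1 Hup2].
  assert (Hdiv : 0 <= t / tau) by (apply Rmult_le_pos; [lra | left; apply Rinv_0_lt_compat; lra]).
  assert (Hk : INR k = IZR (up (t / tau)) - 1).
  { unfold k. rewrite INR_IZR_INZ, Z2Nat.id, minus_IZR; [reflexivity|].
    assert (Hpos : (0 < up (t / tau))%Z) by (apply lt_IZR; lra). lia. }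
  assert (Heq : t = (t / tau) * tau) by (field; lra).
  exists k, (t - INR k * tau). split; [ring|]. split; [split|].
  - apply inS_sub; [exact Ht | exact (proj1 (inSp_INR_mul disc tau k Htau_S))].
  - rewrite Hk. rewrite Heq at 1. nra.
  - rewrite Hk. rewrite Heq at 1. nra.
Qed.

Section AsymptoticallyAutonomous.

Variables (W : R -> Prop) (F : nat -> R -> R) (G : R -> R) (u : nat -> R).

Hypothesis W_interval : is_interval W.
Hypothesis F_mono : forall k w1 w2, W w1 -> W w2 -> w1 <= w2 -> F k w1 <= F k w2.
Hypothesis F_cv : forall w, W w -> Un_cv (fun k => F k w) (G w).
Hypothesis u_W : forall k, W (u k).
Hypothesis u_step : forall k, u (S k) = F k (u k).

Lemma between_cluster_points_W (a b w : R) :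
  cluster_point u a -> cluster_point u b -> a < w < b -> W w.
Proof.
  intros Ha Hb Hw.
  destruct (Ha (w - a) ltac:(lra) 0%nat) as [i [_ Hi]].
  destruct (Hb (b - w) ltac:(lra) 0%nat) as [j [_ Hj]].
  apply Rabs_def2 in Hi. apply Rabs_def2 in Hj.
  apply (W_interval (u i) w (u j)); [apply u_W | apply u_W | lra | lra].
Qed.

Lemma orbit_trapped_below (w : R) : W w -> G w < w ->
  exists K, forall k, (K <= k)%nat -> u k < w -> forall m, u (k + m) < w.
Proof.
  intros Hw HGw. destruct (F_cv w Hw (w - G w) ltac:(lra)) as [K HK].
  exists K. intros k Hk Huk m. induction m as [|m IH].
  - rewrite Nat.add_0_r. exact Huk.
  - rewrite Nat.add_succ_r, u_step.
    assert (Hmono : F (k + m) (u (k + m)) <= F (k + m) w) by (apply F_mono; auto; lra).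
    specialize (HK (k + m)%nat ltac:(lia)). unfold Rdist in HK. apply Rabs_def2 in HK. lra.
Qed.

Lemma orbit_trapped_above (w : R) : W w -> w < G w ->
  exists K, forall k, (K <= k)%nat -> w < u k -> forall m, w < u (k + m).
Proof.
  intros Hw HGw. destruct (F_cv w Hw (G w - w) ltac:(lra)) as [K HK].
  exists K. intros k Hk Huk m. induction m as [|m IH].
  - rewrite Nat.add_0_r. exact Huk.
  - rewrite Nat.add_succ_r, u_step.
    assert (Hmono : F (k + m) w <= F (k + m) (u (k + m))) by (apply F_mono; auto; lra).
    specialize (HK (k + m)%nat ltac:(lia)). unfold Rdist in HK. apply Rabs_def2 in HK. lra.
Qed.

(* An orbit trapped on one side of [w] cannot accumulate on the other side. *)
Lemma fixed_between_cluster_points (a b w : R) :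
  cluster_point u a -> cluster_point u b -> a < w < b -> G w = w.
Proof.
  intros Ha Hb Hw. pose proof (between_cluster_points_W a b w Ha Hb Hw) as Ww.
  destruct (Rtotal_order (G w) w) as [Hlt | [Heq | Hgt]]; [exfalso | exact Heq | exfalso].
  - destruct (orbit_trapped_below w Ww Hlt) as [K HK].
    destruct (Ha (w - a) ltac:(lra) K) as [k [Hk Hka]].
    destruct (Hb (b - w) ltac:(lra) k) as [j [Hj Hjb]].
    apply Rabs_def2 in Hka. apply Rabs_def2 in Hjb.
    specialize (HK k Hk ltac:(lra) (j - k)%nat).
    replace (k + (j - k))%nat with j in HK by lia. lra.
  - destruct (orbit_trapped_above w Ww Hgt) as [K HK].
    destruct (Hb (b - w) ltac:(lra) K) as [k [Hk Hkb]].
    destruct (Ha (w - a) ltac:(lra) k) as [j [Hj Hja]].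
    apply Rabs_def2 in Hkb. apply Rabs_def2 in Hja.
    specialize (HK k Hk ltac:(lra) (j - k)%nat).
    replace (k + (j - k))%nat with j in HK by lia. lra.
Qed.

Hypothesis G_fixed_isolated : forall v, W v -> G v = v ->
  exists delta, 0 < delta /\ forall v', W v' -> v' <> v -> Rabs (v' - v) < delta -> G v' <> v'.

Lemma cluster_point_unique (a b : R) : cluster_point u a -> cluster_point u b -> a = b.
Proof.
  assert (Hnlt : forall a b, cluster_point u a -> cluster_point u b -> ~ a < b).
  { intros a' b' Ha Hb Hab. set (v := (a' + b') / 2).
    assert (Hv : a' < v < b') by (unfold v; lra).
    destruct (G_fixed_isolated v (between_cluster_points_W a' b' v Ha Hb Hv)
                (fixed_between_cluster_points a' b' v Ha Hb Hv)) as [d [Hd Hiso]].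
    set (v' := v + Rmin d ((b' - v) / 2) / 2).
    assert (Hr : 0 < Rmin d ((b' - v) / 2)) by (apply Rmin_pos; lra).
    pose proof (Rmin_l d ((b' - v) / 2)). pose proof (Rmin_r d ((b' - v) / 2)).
    assert (Hv' : a' < v' < b') by (unfold v'; lra).
    apply (Hiso v').
    - exact (between_cluster_points_W a' b' v' Ha Hb Hv').
    - unfold v'. lra.
    - unfold v'. rewrite Rabs_pos_eq; lra.
    - exact (fixed_between_cluster_points a' b' v' Ha Hb Hv'). }
  intros Ha Hb. destruct (Rtotal_order a b) as [Hab | [Hab | Hab]]; [| exact Hab |].
  - exfalso. exact (Hnlt a b Ha Hb Hab).
  - exfalso. exact (Hnlt b a Hb Ha Hab).
Qed.

End AsymptoticallyAutonomous.

Section MonotoneCocycle.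

Variables (disc : bool) (Y : Type) (rho : Y -> Y -> R) (sigma : R -> Y -> Y)
  (W : R -> Prop) (phi : R -> R -> Y -> R).

Hypothesis rho_nonneg : forall x y, 0 <= rho x y.
Hypothesis rho_eq0 : forall x y, rho x y = 0 <-> x = y.
Hypothesis rho_sym : forall x y, rho x y = rho y x.
Hypothesis rho_triangle : forall x y z, rho x z <= rho x y + rho y z.

Hypothesis sigma_0 : forall y, sigma 0 y = y.
Hypothesis sigma_comp : forall t s y, inS disc t -> inS disc s -> sigma (t + s) y = sigma t (sigma s y).

Hypothesis phi_W : forall t u y, inSp disc t -> W u -> W (phi t u y).
Hypothesis phi_cont : forall t u y eps, inSp disc t -> W u -> 0 < eps -> exists delta, 0 < delta /\
  forall t' u' y', inSp disc t' -> W u' -> Rabs (t' - t) < delta ->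
    Rabs (u' - u) < delta -> rho y y' < delta -> Rabs (phi t u y - phi t' u' y') < eps.
Hypothesis phi_0 : forall u y, W u -> phi 0 u y = u.
Hypothesis phi_comp : forall t s u y, inSp disc t -> inSp disc s -> W u ->
  phi (t + s) u y = phi t (phi s u y) (sigma s y).

Lemma seq_lim_sym (y : nat -> Y) (q : Y) :
  seq_lim rho y q -> forall eps, 0 < eps -> exists N, forall n, (N <= n)%nat -> rho q (y n) < eps.
Proof.
  intros Hy eps Heps. destruct (Hy eps Heps) as [N HN].
  exists N. intros n Hn. rewrite rho_sym. exact (HN n Hn).
Qed.

Lemma phi_Un_cv (t w : R) (q : Y) (v : nat -> R) (y : nat -> Y) :
  inSp disc t -> W w -> (forall k, W (v k)) -> Un_cv v w -> seq_lim rho y q ->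
  Un_cv (fun k => phi t (v k) (y k)) (phi t w q).
Proof.
  intros Ht Hw Hv Hvw Hyq eps Heps.
  destruct (phi_cont t w q eps Ht Hw Heps) as [d [Hd Hcont]].
  destruct (Hvw d Hd) as [N1 HN1]. destruct (seq_lim_sym y q Hyq d Hd) as [N2 HN2].
  exists (Nat.max N1 N2). intros k Hk. unfold Rdist. rewrite Rabs_minus_sym.
  apply Hcont; [exact Ht | apply Hv | | apply HN1; lia | apply HN2; lia].
  rewrite Rminus_diag, Rabs_R0. exact Hd.
Qed.

Lemma phi_Un_cv_base (t w : R) (q : Y) (y : nat -> Y) :
  inSp disc t -> W w -> seq_lim rho y q -> Un_cv (fun k => phi t w (y k)) (phi t w q).
Proof.
  intros Ht Hw Hyq. apply (phi_Un_cv t w q (fun _ => w) y Ht Hw (fun _ => Hw)); [|exact Hyq].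
  intros eps Heps. exists 0%nat. intros n _. unfold Rdist. rewrite Rminus_diag, Rabs_R0. exact Heps.
Qed.

Lemma phi_recursion_limit_fixed (tau w : R) (q : Y) (u : nat -> R) (y : nat -> Y) :
  inSp disc tau -> W w -> (forall k, W (u k)) -> (forall k, u (S k) = phi tau (u k) (y k)) ->
  Un_cv u w -> seq_lim rho y q -> phi tau w q = w.
Proof.
  intros Htau Hw Hu Hstep Huw Hyq. apply (UL_sequence (fun k => u (S k))).
  - apply (Un_cv_ext (fun k => phi tau (u k) (y k))); [intros k; symmetry; apply Hstep |].
    exact (phi_Un_cv tau w q u y Htau Hw Hu Huw Hyq).
  - apply (Un_cv_ext (fun k => u (k + 1)%nat)); [intros k; rewrite Nat.add_1_r; reflexivity |].
    apply CV_shift'. exact Huw.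
Qed.

Lemma sigma_fixed_mul (tau : R) (q : Y) (k : nat) :
  inSp disc tau -> sigma tau q = q -> sigma (INR k * tau) q = q.
Proof.
  intros Htau Hq. induction k as [|k IH].
  - rewrite Rmult_0_l. apply sigma_0.
  - rewrite S_INR, Rmult_plus_distr_r, Rmult_1_l, Rplus_comm.
    rewrite sigma_comp; [rewrite IH; exact Hq | exact (proj1 Htau) |].
    exact (proj1 (inSp_INR_mul disc tau k Htau)).
Qed.

Lemma phi_mul_succ (tau w : R) (y : Y) (k : nat) : inSp disc tau -> W w ->
  phi (INR (S k) * tau) w y = phi tau (phi (INR k * tau) w y) (sigma (INR k * tau) y).
Proof.
  intros Htau Hw. rewrite S_INR, Rmult_plus_distr_r, Rmult_1_l, Rplus_comm.
  apply phi_comp; [exact Htau | apply inSp_INR_mul; exact Htau | exact Hw].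
Qed.

Lemma phi_fixed_mul (tau w : R) (q : Y) (k : nat) : inSp disc tau -> W w ->
  sigma tau q = q -> phi tau w q = w -> phi (INR k * tau) w q = w.
Proof.
  intros Htau Hw Hq Hfix. induction k as [|k IH].
  - rewrite Rmult_0_l. apply phi_0. exact Hw.
  - rewrite phi_mul_succ by assumption. rewrite IH, sigma_fixed_mul by assumption. exact Hfix.
Qed.

Lemma asympt_periodic_base_unique (tau : R) (y0 q q' : Y) : inSp disc tau -> 0 < tau ->
  sigma tau q' = q' -> tends0_S disc (fun t => rho (sigma t y0) (sigma t q')) ->
  seq_lim rho (fun k => sigma (INR k * tau) y0) q -> q' = q.
Proof.
  intros Htau Htau0 Hq' Hasy Hlim. apply rho_eq0.
  apply Rle_antisym; [|apply rho_nonneg]. apply Rnot_lt_le. intros Hpos.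
  set (e := rho q' q).
  destruct (Hasy (e / 2) ltac:(unfold e; lra)) as [T HT].
  destruct (nat_mul_eventually_ge tau T Htau0) as [K1 HK1].
  destruct (Hlim (e / 2) ltac:(unfold e; lra)) as [K2 HK2].
  set (k := Nat.max K1 K2).
  specialize (HT (INR k * tau) (proj1 (inSp_INR_mul disc tau k Htau)) (HK1 k ltac:(lia))).
  cbv beta in HT. rewrite (sigma_fixed_mul tau q' k Htau Hq'), Rabs_pos_eq in HT by apply rho_nonneg.
  specialize (HK2 k ltac:(lia)). cbv beta in HK2.
  pose proof (rho_triangle q' (sigma (INR k * tau) y0) q) as Htri.
  rewrite (rho_sym q' (sigma (INR k * tau) y0)) in Htri. unfold e in *. lra.
Qed.

(* Uniformity in [s] comes from compactness of [[0, tau]] (closed in the time set [S]). *)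
Lemma phi_close_on_period (tau w : R) (q : Y) (v : nat -> R) (y : nat -> Y) :
  W w -> (forall k, W (v k)) -> Un_cv v w -> seq_lim rho y q ->
  forall eps, 0 < eps -> exists K, forall k s, (K <= k)%nat -> inSp disc s -> s <= tau ->
    Rabs (phi s (v k) (y k) - phi s w q) < eps.
Proof.
  intros Hw Hv Hvw Hyq eps Heps. apply NNPP. intros Hnot.
  assert (Hfar : forall K, exists k s, (K <= k)%nat /\ inSp disc s /\ s <= tau /\
                   eps <= Rabs (phi s (v k) (y k) - phi s w q)).
  { intros K. apply NNPP. intros HK. apply Hnot. exists K. intros k s Hk Hs Hst.
    apply Rnot_le_lt. intros Hle. apply HK. exists k, s. auto. }
  destruct (choice_pair _ Hfar) as [kn [sn Hn]].
  destruct (cluster_point_bounded sn 0 tau) as [l [Hl Hsl]].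
  { intros n. destruct (Hn n) as [_ [[_ Hs0] [Hst _]]]. lra. }
  assert (HlS : inSp disc l).
  { split; [|exact (proj1 Hl)].
    apply (inS_cluster_point disc sn l); [intros n; exact (proj1 (proj1 (proj2 (Hn n)))) | exact Hsl]. }
  destruct (phi_cont l w q (eps / 2) HlS Hw ltac:(lra)) as [d [Hd Hcont]].
  destruct (Hvw d Hd) as [N1 HN1]. destruct (seq_lim_sym y q Hyq d Hd) as [N2 HN2].
  destruct (Hsl d Hd (Nat.max N1 N2)) as [n [Hn12 Hsnl]].
  destruct (Hn n) as [Hkn [Hs [_ Hfarn]]].
  assert (Hnear : Rabs (phi l w q - phi (sn n) (v (kn n)) (y (kn n))) < eps / 2).
  { apply Hcont; [exact Hs | apply Hv | exact Hsnl | apply HN1; lia | apply HN2; lia]. }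
  assert (Hnear0 : Rabs (phi l w q - phi (sn n) w q) < eps / 2).
  { apply Hcont; [exact Hs | exact Hw | exact Hsnl | | rewrite (proj2 (rho_eq0 q q) eq_refl); exact Hd].
    rewrite Rminus_diag, Rabs_R0. exact Hd. }
  apply Rabs_def2 in Hnear. apply Rabs_def2 in Hnear0.
  revert Hfarn. unfold Rabs. destruct Rcase_abs; lra.
Qed.

Lemma precompact_semi_traj_cluster_point (x0 : R * Y) (t : nat -> R) :
  (forall n, inSp disc (t n)) -> precompact_X W rho (semi_traj disc sigma phi x0) ->
  exists a, W a /\ cluster_point (fun n => phi (t n) (fst x0) (snd x0)) a.
Proof.
  intros Ht Hpre.
  destruct (Hpre (fun n => skew sigma phi (t n) x0)) as [g [p [Hg [Hp Hlim]]]].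
  { intros n. exists (t n). split; [exact (Ht n) | reflexivity]. }
  exists (fst p). split; [exact Hp|].
  intros eps Heps N. destruct (Hlim eps Heps) as [M HM].
  exists (g (Nat.max N M)). split.
  - pose proof (strictly_increasing_ge_id g Hg (Nat.max N M)). lia.
  - specialize (HM (Nat.max N M) ltac:(lia)). unfold rhoX, skew in HM. simpl in HM.
    pose proof (rho_nonneg (sigma (t (g (Nat.max N M))) (snd x0)) (snd p)). lra.
Qed.

Lemma skew_tends0_of_period_samples (tau w : R) (x0 : R * Y) (q : Y) :
  inSp disc tau -> 0 < tau -> W (fst x0) -> W w -> sigma tau q = q -> phi tau w q = w ->
  Un_cv (fun k => phi (INR k * tau) (fst x0) (snd x0)) w ->
  seq_lim rho (fun k => sigma (INR k * tau) (snd x0)) q ->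
  tends0_S disc (fun t => rho (sigma t (snd x0)) (sigma t q)) ->
  tends0_S disc (fun t => rhoX rho (skew sigma phi t x0) (skew sigma phi t (w, q))).
Proof.
  intros Htau Htau0 Hx0 Hw Hq Hfix Hu Hy Hasy eps Heps.
  destruct (phi_close_on_period tau w q _ _ Hw (fun k => phi_W _ _ _ (inSp_INR_mul disc tau k Htau) Hx0)
              Hu Hy (eps / 2) ltac:(lra)) as [K HK].
  destruct (Hasy (eps / 2) ltac:(lra)) as [T HT].
  exists (Rmax T (INR (S K) * tau)). intros t Ht HtT.
  pose proof (Rmax_l T (INR (S K) * tau)). pose proof (Rmax_r T (INR (S K) * tau)).
  assert (HtS : inSp disc t).
  { split; [exact Ht|]. pose proof (pos_INR (S K)). nra. }
  destruct (inS_period_decomposition disc tau t Htau0 Htau HtS) as [k [s [-> [Hs Hst]]]].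
  assert (HKk : (K <= k)%nat).
  { apply Nat.lt_succ_r, INR_lt. apply (Rmult_lt_reg_r tau); [exact Htau0|].
    rewrite S_INR in *. nra. }
  specialize (HK k s HKk Hs (Rlt_le _ _ Hst)).
  specialize (HT (s + INR k * tau) Ht ltac:(lra)). cbv beta in HT.
  rewrite Rabs_pos_eq in HT by apply rho_nonneg.
  unfold rhoX, skew. simpl.
  rewrite (phi_comp s (INR k * tau) (fst x0)) by auto using inSp_INR_mul.
  rewrite (phi_comp s (INR k * tau) w) by auto using inSp_INR_mul.
  rewrite (phi_fixed_mul tau w q k), (sigma_fixed_mul tau q k) by assumption.
  rewrite Rabs_pos_eq.
  - lra.
  - pose proof (Rabs_pos (phi s (phi (INR k * tau) (fst x0) (snd x0)) (sigma (INR k * tau) (snd x0))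
                           - phi s w q)).
    pose proof (rho_nonneg (sigma (s + INR k * tau) (snd x0)) (sigma (s + INR k * tau) q)). lra.
Qed.

End MonotoneCocycle.

Theorem mainTheorem10 (disc : bool) (Y : Type) (rho : Y -> Y -> R)
  (sigma : R -> Y -> Y) (W : R -> Prop) (phi : R -> R -> Y -> R)
  (tau : R) (x0 : R * Y) (q : Y) :
  complete_metric rho ->
  dyn_system disc rho sigma ->
  is_interval W ->
  monotone_cocycle disc rho sigma W phi ->
  inSp disc tau -> 0 < tau ->
  (* (1) strict monotonicity at times k tau *)
  (forall (k : nat) u1 u2 y, W u1 -> W u2 -> u1 < u2 ->
     phi (INR k * tau) u1 y < phi (INR k * tau) u2 y) ->
  (* (2) precompact semi-trajectory *)
  inX W x0 ->
  precompact_X W rho (semi_traj disc sigma phi x0) ->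
  (* (3) y0 := h x0 asymptotically tau-periodic, q = lim sigma(k tau, y0) *)
  asympt_periodic_Y disc rho sigma tau (snd x0) ->
  seq_lim rho (fun k => sigma (INR k * tau) (snd x0)) q ->
  (* (4) tau-periodic points in the fibre over q are isolated *)
  (forall u, W u -> phi tau u q = u ->
     exists delta, 0 < delta /\
       forall u', W u' -> u' <> u -> Rabs (u' - u) < delta -> phi tau u' q <> u') ->
  (* conclusion: x0 asymptotically tau-periodic *)
  exists p : R * Y, inX W p /\ skew sigma phi tau p = p /\
    tends0_S disc (fun t => rhoX rho (skew sigma phi t x0) (skew sigma phi t p)).
Proof.
  intros [[rho_nonneg [rho_eq0 [rho_sym rho_triangle]]] _] [sigma_0 [sigma_comp _]] W_interval
    [phi_W [phi_cont [phi_0 [phi_comp phi_mono]]]] Htau Htau0 _ Hx0 Hpre [q' [Hq' Hasy]] Hy Hiso.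
  set (u := fun k => phi (INR k * tau) (fst x0) (snd x0)).
  set (y := fun k => sigma (INR k * tau) (snd x0)).
  assert (HuW : forall k, W (u k)) by (intros k; apply phi_W; [apply inSp_INR_mul |]; auto).
  assert (Hstep : forall k, u (S k) = phi tau (u k) (y k)) by (intros k; eapply phi_mul_succ; eauto).
  destruct (Un_cv_of_unique_cluster_point W u) as [us [Hus Hu]].
  - intros h _. eapply precompact_semi_traj_cluster_point; eauto.
    intros n. apply inSp_INR_mul. exact Htau.
  - intros a b _ _.
    apply (cluster_point_unique W (fun k w => phi tau w (y k)) (fun w => phi tau w q) u); auto.
    intros w Hw. eapply phi_Un_cv_base; eauto.
  - assert (Hfix : phi tau us q = us) by (eapply phi_recursion_limit_fixed; eauto).
    assert (Hqq : q' = q) by (eapply asympt_periodic_base_unique; eauto).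
    subst q'.
    exists (us, q). split; [exact Hus|]. split.
    + unfold skew. simpl. rewrite Hfix, Hq'. reflexivity.
    + eapply skew_tends0_of_period_samples; eauto.
Qed.
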